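(* Let $X,Y$ be real Banach spaces, $C\subseteq X$ nonempty and closed, $D\subseteq Y$ nonempty, $g:X\to Y$, and $x_0\in g^{-1}(D)\cap C$. Suppose $g$ is locally Lipschitz around $x_0$ and set $y_0:=g(x_0)$. Endow $X\times Y$ with the norm $\|(x,y)\|=\|x\|_X+\|y\|_Y$ and define $\tilde g:X\times Y\to Y$, $\tilde g(x,y)=g(x)-y$. Then the following are equivalent: (i) there exist $a>0$, $s>0$ such that $d_{g^{-1}(D)\cap C}(x)\le a\,d_D(g(x))$ for all $x\in B_X(x_0,s)\cap C$; (ii) there exist $a'>0$, $s'>0$ such that $d_{\tilde g^{-1}(0)\cap(C\times D)}(x,y)\le a'\|\tilde g(x,y)\|_Y$ for all $(x,y)\in B_{X\times Y}((x_0,y_0),s')\cap(C\times D)$.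
   Context: For a nonempty set $A$ in a normed space, $d_A(z)=\inf_{a\in A}\|z-a\|$; $B(z,r)$ denotes the closed ball of radius $r$ centred at $z$. *)

From HB Require Import structures.
From mathcomp Require Import all_boot all_order all_algebra.
From mathcomp Require Import all_classical all_reals all_analysis.
Set Implicit Arguments. Unset Strict Implicit. Unset Printing Implicit Defensive.
Import Order.TTheory GRing.Theory Num.Theory.
Import numFieldNormedType.Exports.
Local Open Scope classical_set_scope.
Local Open Scope ring_scope.

Definition dist_set {R : realType} {V : normedModType R} (A : set V) (z : V) : R :=
  inf [set `|z - a| | a in A].

Definition dist_set_sum {R : realType} {X Y : normedModType R}
  (S : set (X * Y)) (x : X) (y : Y) : R :=
  inf [set `|x - p.1| + `|y - p.2| | p in S].

Definition locally_lipschitz_at {R : realType} {X Y : normedModType R}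
  (g : X -> Y) (x0 : X) : Prop :=
  exists L : R, exists r : R, 0 <= L /\ 0 < r /\
    forall x x' : X, `|x - x0| <= r -> `|x' - x0| <= r ->
      `|g x - g x'| <= L * `|x - x'|.

(* Write A := g^-1(D) ∩ C and S for the set of points (x', g x') with x' ∈ A,
   which is exactly gt^-1(0) ∩ (C × D).  Projecting S onto A gives
   d_A(x) <= d_S(x, y) for every y; lifting x' ∈ A to (x', g x') ∈ S gives
   d_S(x, y) <= (1 + L) d_A(x) + |g x - y| for L a Lipschitz constant of g,
   provided the nearly nearest points x' stay in the Lipschitz ball, which (i)
   guarantees near x0.  So (i) yields (ii) with a' = (1 + L) a + 1, and (ii),
   applied at points y ∈ D nearly nearest to g x, yields (i) with a = a'. *)

From HB Require Import structures.
From mathcomp Require Import all_boot all_order all_algebra.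
From mathcomp Require Import all_classical all_reals all_analysis.
From mathcomp Require Import lra.
Import Order.TTheory GRing.Theory Num.Theory.
Import numFieldNormedType.Exports.
Local Open Scope classical_set_scope.
Local Open Scope ring_scope.

Section DistSet.
Context {R : realType} {V : normedModType R}.
Implicit Types (A : set V) (z a : V).

Lemma dist_set_le {A} z {a} : A a -> dist_set A z <= `|z - a|.
Proof. by move=> Aa; apply: ge_inf; [exists 0 => _ [b _ <-] | exists a]. Qed.

Lemma dist_set_adherent {A} z {e : R} : A !=set0 -> 0 < e ->
  exists2 a, A a & `|z - a| < dist_set A z + e.
Proof.
move=> [a Aa] e_gt0.
have hinf : has_inf [set `|z - b| | b in A].
  by split; [exists `|z - a|, a | exists 0 => _ [c _ <-]].
by have [_ [b Ab <-]] := inf_adherent e_gt0 hinf; exists b.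
Qed.

Lemma le_dist_set_approx {A z} {u c b : R} (rho : R) :
  A !=set0 -> 0 <= c -> 0 < rho ->
  (forall a, A a -> `|z - a| < dist_set A z + rho -> u <= c * `|z - a| + b) ->
  u <= c * dist_set A z + b.
Proof.
move=> A0 c_ge0 rho_gt0 Hu; apply/ler_addgt0Pr => e e_gt0.
have c1_gt0 : 0 < c + 1 by lra.
set eta := Num.min rho (e / (c + 1)).
have eta_gt0 : 0 < eta by rewrite lt_min rho_gt0 divr_gt0.
have eta_e : c * eta <= e.
  have : eta * (c + 1) <= e by rewrite -ler_pdivlMr // ge_min lexx orbT.
  by nra.
have [a Aa za] := dist_set_adherent z A0 eta_gt0.
have za_rho : `|z - a| < dist_set A z + rho.
  by apply: (lt_le_trans za); rewrite lerD2l ge_min lexx.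
have := Hu a Aa za_rho.
have := ler_wpM2l c_ge0 (ltW za); lra.
Qed.

End DistSet.

Section SumDistance.
Context {R : realType} {X Y : normedModType R}.
Implicit Types (S : set (X * Y)) (x : X) (y : Y).

Lemma dist_set_sum_le {S} x y p : S p ->
  dist_set_sum S x y <= `|x - p.1| + `|y - p.2|.
Proof.
move=> Sp; apply: ge_inf; last by exists p.
by exists 0 => _ [q _ <-]; rewrite addr_ge0.
Qed.

Lemma dist_set_le_dist_set_sum {A : set X} {S} x y : S !=set0 ->
  (forall p, S p -> A p.1) -> dist_set A x <= dist_set_sum S x y.
Proof.
move=> [p Sp] SA.
apply: lb_le_inf; first by exists (`|x - p.1| + `|y - p.2|), p.
move=> _ [q Sq <-]; apply: le_trans (dist_set_le x (SA q Sq)) _.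
by rewrite lerDl.
Qed.

End SumDistance.

Section GraphErrorBound.
Context {R : realType} {X Y : normedModType R}.
Context {C : set X} {D : set Y} {g : X -> Y} {x0 : X} {L r : R}.
Hypothesis A_x0 : (g @^-1` D `&` C) x0.
Hypothesis g_lip : forall x x' : X, `|x - x0| <= r -> `|x' - x0| <= r ->
  `|g x - g x'| <= L * `|x - x'|.

Let A := g @^-1` D `&` C.
Let S :=
  (fun p : X * Y => g p.1 - p.2) @^-1` [set 0] `&` [set p | C p.1 /\ D p.2].

Lemma dist_set_sum_graph_le x y {x'} : A x' ->
  dist_set_sum S x y <= `|x - x'| + `|y - g x'|.
Proof.
by move=> [Dx' Cx']; apply: (dist_set_sum_le x y (x', g x')); rewrite /S /= subrr.
Qed.

Lemma dist_set_le_graph x y : dist_set A x <= dist_set_sum S x y.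
Proof.
apply: dist_set_le_dist_set_sum => [|[x' y'] [/= /eqP]].
  by case: A_x0 => Dgx0 Cx0; exists (x0, g x0); rewrite /S /= subrr.
by rewrite subr_eq0 => /eqP <- [].
Qed.

Lemma graph_error_bound_of_error_bound {a s : R} :
  0 <= L -> 0 < r -> 0 < a -> 0 < s ->
  (forall x, `|x - x0| <= s -> C x -> dist_set A x <= a * dist_set D (g x)) ->
  exists a' s' : R, 0 < a' /\ 0 < s' /\ forall x y,
    `|x - x0| + `|y - g x0| <= s' -> C x -> D y ->
    dist_set_sum S x y <= a' * `|g x - y|.
Proof.
move=> L_ge0 r_gt0 a_gt0 s_gt0 bound.
have aL_ge0 : 0 <= a * (L + 1) by nra.
set k := 1 + a * (L + 1).
have k_ge1 : 1 <= k by rewrite /k; lra.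
exists ((L + 1) * a + 1), (Num.min s (r / (2 * k))).
split; first by rewrite mulrC; lra.
split; first by rewrite lt_min s_gt0 divr_gt0 //; lra.
move=> x y; set s' := Num.min _ _ => hxy Cx Dy.
have s'_s : s' <= s by rewrite ge_min lexx.
have s'_r : s' * (2 * k) <= r by rewrite -ler_pdivlMr ?ge_min ?lexx ?orbT //; lra.
have hx : `|x - x0| <= s' by have := normr_ge0 (y - g x0); lra.
have hy : `|y - g x0| <= s' by have := normr_ge0 (x - x0); lra.
have hxr : `|x - x0| <= r by have := normr_ge0 (x - x0); nra.
have hx0r : `|x0 - x0| <= r by rewrite subrr normr0 ltW.
set n := `|g x - y|.
have n_le : n <= (L + 1) * s'.
  rewrite /n; have := ler_distD (g x0) (g x) y; rewrite (distrC (g x0)).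
  have := g_lip x x0 hxr hx0r; have := ler_wpM2l L_ge0 hx; lra.
have dA : dist_set A x <= a * n.
  apply: le_trans (bound x (le_trans hx s'_s) Cx) _.
  by apply: ler_wpM2l; [exact: ltW | exact: dist_set_le].
have L1_ge0 : 0 <= 1 + L by lra.
suff : dist_set_sum S x y <= (1 + L) * dist_set A x + n.
  by have := ler_wpM2l L1_ge0 dA; lra.
have A0 : A !=set0 by exists x0.
apply: (le_dist_set_approx (r / 2) A0 L1_ge0) => [|x' Ax' hxx']; first lra.
have x'r : `|x' - x0| <= r.
  have := ler_distD x x' x0; rewrite (distrC x' x).
  have := ler_wpM2l (ltW a_gt0) n_le; rewrite /k in s'_r; nra.
have := dist_set_sum_graph_le x y Ax'; have := g_lip x x' hxr x'r.
have := ler_distD (g x) y (g x'); rewrite (distrC y (g x)) -/n; lra.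
Qed.

Lemma error_bound_of_graph_error_bound {a' s' : R} :
  0 <= L -> 0 < r -> 0 < a' -> 0 < s' ->
  (forall x y, `|x - x0| + `|y - g x0| <= s' -> C x -> D y ->
    dist_set_sum S x y <= a' * `|g x - y|) ->
  exists a s : R, 0 < a /\ 0 < s /\
    forall x, `|x - x0| <= s -> C x -> dist_set A x <= a * dist_set D (g x).
Proof.
move=> L_ge0 r_gt0 a'_gt0 s'_gt0 bound.
have k_gt0 : 0 < 2 * (1 + 2 * L) by lra.
exists a', (Num.min r (s' / (2 * (1 + 2 * L)))).
split=> //; split; first by rewrite lt_min r_gt0 divr_gt0.
move=> x; set s := Num.min _ _ => hx Cx.
have hxr : `|x - x0| <= r by apply: le_trans hx _; rewrite ge_min lexx.
have s_s' : s * (2 * (1 + 2 * L)) <= s'.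
  by rewrite -ler_pdivlMr // ge_min lexx orbT.
have hx0r : `|x0 - x0| <= r by rewrite subrr normr0 ltW.
have gx_near : `|g x - g x0| <= L * s.
  exact: le_trans (g_lip x x0 hxr hx0r) (ler_wpM2l L_ge0 hx).
have dD : dist_set D (g x) <= L * s.
  by case: A_x0 => Dgx0 _; apply: le_trans (dist_set_le (g x) Dgx0) gx_near.
have D0 : D !=set0 by case: A_x0 => Dgx0 _; exists (g x0).
rewrite -[leRHS]addr0.
apply: (le_dist_set_approx (s' / 2) D0 (ltW a'_gt0)) => [|y Dy hy]; first lra.
have hxy : `|x - x0| + `|y - g x0| <= s'.
  have := ler_distD (g x) y (g x0); rewrite (distrC y (g x)); lra.
by rewrite addr0; apply: le_trans (dist_set_le_graph x y) (bound x y hxy Cx Dy).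
Qed.

End GraphErrorBound.

Theorem lemma3p2 (R : realType) (X Y : completeNormedModType R)
  (C : set X) (D : set Y) (g : X -> Y) (x0 : X) :
  C !=set0 -> closed C -> D !=set0 ->
  (g @^-1` D `&` C) x0 ->
  locally_lipschitz_at g x0 ->
  let y0 := g x0 in
  let gt := fun p : X * Y => g p.1 - p.2 in
  (exists a s : R, 0 < a /\ 0 < s /\
     forall x : X, `|x - x0| <= s -> C x ->
       dist_set (g @^-1` D `&` C) x <= a * dist_set D (g x))
  <->
  (exists a' s' : R, 0 < a' /\ 0 < s' /\
     forall (x : X) (y : Y), `|x - x0| + `|y - y0| <= s' -> C x -> D y ->
       dist_set_sum (gt @^-1` [set 0] `&` [set p | C p.1 /\ D p.2]) x y
         <= a' * `|gt (x, y)|).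
Proof.
move=> _ _ _ A_x0 [L [r [L_ge0 [r_gt0 g_lip]]]] y0 gt.
split=> [[a [s [a_gt0 [s_gt0 bound]]]] | [a' [s' [a'_gt0 [s'_gt0 bound]]]]].
- exact: (graph_error_bound_of_error_bound A_x0 g_lip L_ge0 r_gt0 a_gt0 s_gt0
    bound).
- exact: (error_bound_of_graph_error_bound A_x0 g_lip L_ge0 r_gt0 a'_gt0 s'_gt0
    bound).
Qed.
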